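(* Let $X$ be a Baire topological space, $Y$ a metric space and $\mathcal F\subseteq Y^X$. (1) If $\mathcal F$ is equi-GLP, then $\mathcal F$ is equi-cliquish. (2) If $X$ is a metric space and $\mathcal F$ is equi-Baire 1, then $\mathcal F$ is equi-cliquish.
   Context: A space is Baire if every nonempty open subset is nonmeager. A family of subsets of $X$ is discrete if each point has a neighborhood meeting at most one member; $\sigma$-discrete if it is a countable union of discrete families. $\mathcal F\subseteq Y^X$ (with $(Y,d)$ metric) is equi-GLP if for every $\varepsilon>0$ there is a $\sigma$-discrete family $\mathcal A_\varepsilon$ of closed subsets of $X$ with $X=\bigcup\mathcal A_\varepsilon$ and $\operatorname{diam}f(A)\le\varepsilon$ for all $A\in\mathcal A_\varepsilon$ and all $f\in\mathcal F$; equi-cliquish if for every $\varepsilon>0$ and every nonempty open $U\subseteq X$ there is a nonempty open $O\subseteq U$ with $\operatorname{diam}f(O)<\varepsilon$ for all $f\in\mathcal F$; for $X$ metric with metric $\rho$, equi-Baire 1 if for every $\varepsilon>0$ there is $\delta_\varepsilon\colon X\to(0,\infty)$ such that for all $x,y\in X$ and $f\in\mathcal F$, $\rho(x,y)<\min\{\delta_\varepsilon(x),\delta_\varepsilon(y)\}$ implies $d(f(x),f(y))<\varepsilon$. *)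

From HB Require Import structures.
From mathcomp Require Import all_boot all_order all_algebra.
From mathcomp Require Import all_classical all_reals all_analysis.
Set Implicit Arguments. Unset Strict Implicit. Unset Printing Implicit Defensive.
Import Order.TTheory GRing.Theory Num.Theory.
Local Open Scope classical_set_scope.
Local Open Scope ring_scope.

Definition nowhere_dense (X : topologicalType) (A : set X) : Prop :=
  interior (closure A) = set0.

Definition meager (X : topologicalType) (A : set X) : Prop :=
  exists N : (set X)^nat, (forall n, nowhere_dense (N n)) /\ A `<=` \bigcup_n N n.

Definition baire_space (X : topologicalType) : Prop :=
  forall U : set X, open U -> U !=set0 -> ~ meager U.

Definition discrete_family (X : topologicalType) (G : set (set X)) : Prop :=
  forall x : X, exists2 N : set X, nbhs x N &
    forall A B, G A -> G B -> N `&` A !=set0 -> N `&` B !=set0 -> A = B.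

Definition sigma_discrete (X : topologicalType) (G : set (set X)) : Prop :=
  exists H : nat -> set (set X), (forall n, discrete_family (H n)) /\
    G = \bigcup_n H n.

Definition diam_img {R : realType} (X : Type) (Y : metricType R)
    (f : X -> Y) (A : set X) : \bar R :=
  ereal_sup [set (mdist (f x) (f y))%:E | x in A & y in A].

Definition equi_GLP {R : realType} (X : topologicalType) (Y : metricType R)
    (F : set (X -> Y)) : Prop :=
  forall eps : R, 0 < eps ->
    exists AA : set (set X),
      [/\ sigma_discrete AA, (forall A, AA A -> closed A),
          \bigcup_(A in AA) A = setT &
          forall A f, AA A -> F f -> (diam_img f A <= eps%:E)%E].

Definition equi_cliquish {R : realType} (X : topologicalType) (Y : metricType R)
    (F : set (X -> Y)) : Prop :=
  forall eps : R, 0 < eps -> forall U : set X, open U -> U !=set0 ->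
    exists O : set X, [/\ open O, O !=set0, O `<=` U &
      forall f, F f -> (diam_img f O < eps%:E)%E].

Definition equi_baire1 {R : realType} (X Y : metricType R)
    (F : set (X -> Y)) : Prop :=
  forall eps : R, 0 < eps ->
    exists delta : X -> R, (forall x, 0 < delta x) /\
      forall x y f, F f -> mdist x y < Num.min (delta x) (delta y) ->
        mdist (f x) (f y) < eps.

From HB Require Import structures.
From mathcomp Require Import all_boot all_order all_algebra.
From mathcomp Require Import all_classical all_reals all_analysis.
From mathcomp Require Import lra.
Set Implicit Arguments. Unset Strict Implicit. Unset Printing Implicit Defensive.
Import Order.TTheory GRing.Theory Num.Theory.
Local Open Scope classical_set_scope.
Local Open Scope ring_scope.

(* In both parts a nonempty open U is covered by countably many sets S n
   (the unions of the n-th discrete subfamily, resp. the points where the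
   modulus delta is at least 1/(n+1)); by the Baire property some S n is
   dense in a nonempty open W inside U.  For a discrete family of closed
   sets, W then contains a nonempty open piece lying in a single member,
   whose images have small diameter.  For a modulus delta, points of a small
   ball in W are each close to a point of S n, and any two points of S n
   closer than 1/(n+1) have close images. *)

Lemma baire_dense_piece (X : topologicalType) (U : set X) (S : nat -> set X) :
  baire_space X -> open U -> U !=set0 -> U `<=` \bigcup_n S n ->
  exists n W, [/\ open W, W !=set0, W `<=` U & W `<=` closure (S n)].
Proof.
move=> hB oU nU cov.
have [//|noW] := pselect (exists n W,
  [/\ open W, W !=set0, W `<=` U & W `<=` closure (S n)]).
(* otherwise every S n `&` U is nowhere dense and U is meager *)
exfalso; apply: (hB U oU nU).
exists (fun n => S n `&` U); split; last first.
  by move=> x Ux; have [n _ Sn] := cov x Ux; exists n.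
move=> n; apply/seteqP; split => [v Vv|//].
apply: noW; exists n, (interior (closure (S n `&` U)) `&` U); split.
- exact: openI (@open_interior _ _) oU.
- have nV : nbhs v (interior (closure (S n `&` U))).
    by apply: open_nbhs_nbhs; split; [exact: open_interior | exact: Vv].
  have [w [[Sw Uw] Vw]] := interior_subset Vv _ nV.
  by exists w.
- by move=> y [].
- move=> y [/interior_subset Cy _]; apply: (closureS _ Cy).
  by move=> z [].
Qed.

Lemma diam_img_le {R : realType} {X : Type} {Y : metricType R} (f : X -> Y)
    (O : set X) (c : R) :
  (forall x y, O x -> O y -> mdist (f x) (f y) <= c) ->
  (diam_img f O <= c%:E)%E.
Proof.
move=> H; apply: ge_ereal_sup => _ [x Ox [y Oy <-]].
by rewrite lee_fin; apply: H.
Qed.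

Lemma diam_imgS {R : realType} {X : Type} {Y : metricType R} (f : X -> Y)
    (O A : set X) :
  O `<=` A -> (diam_img f O <= diam_img f A)%E.
Proof.
move=> OA; apply: ereal_sup_le => _ [x Ox [y Oy <-]].
by exists x; [apply: OA | exists y => //; apply: OA].
Qed.

Lemma discrete_closed_open_piece (X : topologicalType) (H : set (set X))
    (W : set X) :
  discrete_family H -> (forall A, H A -> closed A) -> open W -> W !=set0 ->
  W `<=` closure (\bigcup_(A in H) A) ->
  exists O A, [/\ open O, O !=set0, O `<=` W, H A & O `<=` A].
Proof.
move=> Hd Hc oW [x Wx] WC.
have [N Nx HN] := Hd x.
have nW : nbhs x W by apply: open_nbhs_nbhs.
have [y [[A0 HA0 A0y] [Ny Wy]]] := WC x Wx _ (filterI Nx nW).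
exists (interior N `&` W), A0; split => //.
- exact: openI (@open_interior _ _) oW.
- by exists x.
- (* a neighbourhood of p inside interior N can only meet the member A0 *)
  move=> p [Np Wp]; rewrite ((closure_id A0).1 (Hc _ HA0)) => B nB.
  have [q [[A HA Aq] [Bq Nq]]] := WC p Wp _ (filterI nB Np).
  have -> : A0 = A by apply: (HN A0 A HA0 HA); [exists y | exists q].
  by exists q.
Qed.

Lemma equi_GLP_cliquish (R : realType) (X : topologicalType)
    (Y : metricType R) (F : set (X -> Y)) :
  baire_space X -> equi_GLP F -> equi_cliquish F.
Proof.
move=> hB hG eps e0 U oU nU.
have [AA [[H [Hd HE]] Hc Hcov Hdiam]] := hG (eps / 2) (divr_gt0 e0 (ltr0Sn _ _)).
have cov : U `<=` \bigcup_n \bigcup_(A in H n) A.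
  move=> x _; have : (\bigcup_(A in AA) A) x by rewrite Hcov.
  by case=> A; rewrite HE => -[n _ Hn] Ax; exists n => //; exists A.
have [n [W [oW nW WU WC]]] := baire_dense_piece hB oU nU cov.
have sub_AA A : H n A -> AA A by rewrite HE; exists n.
have [V [A [oV nV VW HA VA]]] :=
  discrete_closed_open_piece (Hd n) (fun A HA => Hc A (sub_AA A HA)) oW nW WC.
exists V; split => // [x /VW/WU //|f Ff].
apply: le_lt_trans (diam_imgS f VA) _.
by apply: le_lt_trans (Hdiam _ _ (sub_AA A HA) Ff) _; rewrite lte_fin; lra.
Qed.

Lemma interior_ballI_nonempty (R : realType) (X : metricType R) (z : X)
    (r : R) (W : set X) :
  0 < r -> open W -> W z -> interior (ball z r `&` W) !=set0.
Proof.
move=> r0 oW Wz; exists z.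
by apply: filterI (nbhsx_ballx z _ r0) _; exact: open_nbhs_nbhs.
Qed.

Section equi_baire1_modulus.
Variables (R : realType) (X Y : metricType R) (F : set (X -> Y)).
Variables (eps : R) (delta : X -> R).
Hypothesis delta_gt0 : forall x, 0 < delta x.
Hypothesis delta_mod : forall x y f, F f ->
  mdist x y < Num.min (delta x) (delta y) -> mdist (f x) (f y) < eps.

Lemma delta_level_cover : [set: X] `<=` \bigcup_n [set x | n.+1%:R^-1 <= delta x].
Proof.
move=> x _; have [N _ HN] := near_infty_natSinv_lt (PosNum (delta_gt0 x)).
by exists N => //; apply/ltW/(HN N (leqnn N)).
Qed.

Variables (c : R) (z : X) (W : set X).
Hypothesis WC : W `<=` closure [set x | c <= delta x].

Let O := interior (ball z (c / 2) `&` W).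

Lemma near_delta_level x : O x ->
  exists e, [/\ c <= delta e, mdist x e < Num.min (delta x) (delta e)
              & mdist z e < c / 2].
Proof.
move=> Ox; have [Bx Wx] := interior_subset Ox.
have [e [ce [xe [ze _]]]] :=
  WC Wx (filterI (nbhsx_ballx x (delta x) (delta_gt0 x)) Ox).
move: xe ze Bx; rewrite !ballEmdist /= => xe ze Bx.
exists e; split => //; rewrite lt_min xe /=.
apply: lt_le_trans ce; apply: le_lt_trans (metric_triangle x z e) _.
by rewrite metric_sym; lra.
Qed.

Lemma delta_level_osc x y f : F f -> O x -> O y -> mdist (f x) (f y) <= 3 * eps.
Proof.
move=> Ff Ox Oy.
have [e [ce xe ze]] := near_delta_level Ox.
have [e' [ce' ye' ze']] := near_delta_level Oy.
have ee' : mdist e e' < Num.min (delta e) (delta e').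
  have : mdist e e' < c.
    apply: le_lt_trans (metric_triangle e z e') _.
    by rewrite (metric_sym e z); lra.
  by move=> h; rewrite lt_min (lt_le_trans h ce) (lt_le_trans h ce').
have fxe := delta_mod Ff xe; have fee := delta_mod Ff ee'.
have fye := delta_mod Ff ye'; rewrite metric_sym in fye.
apply: le_trans (metric_triangle (f x) (f e) (f y)) _.
apply: le_trans (lerD (lexx _) (metric_triangle (f e) (f e') (f y))) _.
lra.
Qed.

End equi_baire1_modulus.

Lemma equi_baire1_cliquish (R : realType) (X Y : metricType R)
    (F : set (X -> Y)) :
  baire_space X -> equi_baire1 F -> equi_cliquish F.
Proof.
move=> hB hb eps e0 U oU nU.
have [delta [d0 hd]] := hb (eps / 4) (divr_gt0 e0 (ltr0Sn _ _)).
have cov : U `<=` \bigcup_n [set x | n.+1%:R^-1 <= delta x].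
  by move=> x _; apply: delta_level_cover.
have [n [W [oW [z Wz] WU WC]]] := baire_dense_piece hB oU nU cov.
have c0 : 0 < n.+1%:R^-1 :> R by rewrite invr_gt0.
exists (interior (ball z (n.+1%:R^-1 / 2) `&` W)); split.
- exact: open_interior.
- exact: interior_ballI_nonempty (divr_gt0 c0 (ltr0Sn _ 1)) oW Wz.
- by move=> p /interior_subset [_ /WU].
- move=> f Ff; apply: (@le_lt_trans _ _ (3 * (eps / 4))%:E); last first.
    by rewrite lte_fin; lra.
  by apply: diam_img_le => x y; apply: (delta_level_osc d0 hd WC).
Qed.

Theorem proposition3p6 (R : realType) :
  (forall (X : topologicalType) (Y : metricType R) (F : set (X -> Y)),
      baire_space X -> equi_GLP F -> equi_cliquish F) /\
  (forall (X Y : metricType R) (F : set (X -> Y)),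
      baire_space X -> equi_baire1 F -> equi_cliquish F).
Proof.
split; [exact: equi_GLP_cliquish | exact: equi_baire1_cliquish].
Qed.
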